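(* Assume $\xi_p\in F$, let $m\ge1$, and suppose $K/F$ is cyclotomic, i.e. $K=F(\mu_{p^k})$ for some $k\ge1$; if $p=2$ assume moreover $\omega>1$. Let $d\in\mathbb Z$ satisfy $d\equiv\chi(\sigma)\pmod{p^{\min\{m,\nu\}}}$, where $\chi$ is the cyclotomic character of $K/F$. Then $((-\infty,\dots,-\infty),d)$ is a minimal norm pair of length $m$.
   Context: Let $p$ be a prime, $n\ge1$, and $K/F$ a cyclic Galois extension of degree $p^n$ with $\mathrm{char}(K)\neq p$; $G=\mathrm{Gal}(K/F)=\langle\sigma\rangle$. For $0\le i\le n$ let $K_i$ be the intermediate field with $[K_i:F]=p^i$. For $k\ge1$, $\mu_{p^k}$ is the group of $p^k$-th roots of unity. $\omega$ (resp. $\nu$) is $\infty$ if $F$ (resp. $K$) contains $\mu_{p^k}$ for all $k$, and otherwise the largest $k$ with $\mu_{p^k}\subseteq F$ (resp. $\subseteq K$). $U_i=1+p^i\mathbb Z$, $v_p$ the $p$-adic valuation. $\chi(\sigma)\in(\mathbb Z/p^\nu\mathbb Z)^\times$ is defined by $\sigma(\zeta)=\zeta^{\chi(\sigma)}$ for $\zeta\in\mu_{p^\nu}$. Norm pair: for $m\ge1$, a pair $(\mathbf a,d)$ with $\mathbf a=(a_0,\dots,a_{m-1})\in\{-\infty,0,1,\dots,n\}^m$, $a_0<n$, and $d\in U_1$ is a norm pair of length $m$ if there exist $\alpha,\delta_m\in K^\times$ and $\delta_i\in K_{a_i}^\times$ for $0\le i<m$ (with $\delta_i=1$ when $a_i=-\infty$)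 such that $\sigma(\alpha)=\alpha^d\delta_0\delta_1^p\cdots\delta_m^{p^m}$ and $\xi_p=N_{K/F}(\alpha)^{(d-1)/p}\,N_{K_{n-1}/F}(\delta_0)\prod_{i=1}^m N_{K/F}(\delta_i)^{p^{i-1}}$ for a fixed primitive $p$-th root of unity $\xi_p$. Order: $(\mathbf a,d)\le(\mathbf a',d')$ if $\mathbf a<\mathbf a'$ lexicographically ($-\infty$ smallest), or $\mathbf a=\mathbf a'$ and $\min\{v_p(d'-1),m\}\le\min\{v_p(d-1),m\}$. A norm pair of length $m$ is minimal if it is $\le$ every norm pair of length $m$. *)

From HB Require Import structures.
From mathcomp Require Import all_boot all_order all_algebra all_fingroup all_solvable all_field.
Import Order.TTheory GRing.Theory Num.Theory.
Local Open Scope ring_scope.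

Section NormPairs.
Variables (F0 : fieldType) (L : splittingFieldType F0).

Definition has_mu (p : nat) (E : {subfield L}) (k : nat) : Prop :=
  exists2 z : L, z \in E & (p ^ k)%N.-primitive_root z.

(* j = min(m, nu), nu = sup { k | mu_{p^k} in K } (possibly infinite) *)
Definition is_min_m_nu (p : nat) (K : {subfield L}) (m j : nat) : Prop :=
  [/\ (j <= m)%N, has_mu p K j & ((j < m)%N -> ~ has_mu p K j.+1)].

(* d = chi(sigma) mod p^j : sigma(zeta) = zeta^d for every zeta in mu_{p^j} *)
Definition chi_congr (p : nat) (K : {subfield L}) (sigma : gal_of K)
    (j : nat) (d : int) : Prop :=
  forall z : L, z \in K -> z ^+ (p ^ j) = 1 -> sigma z = z ^ d.

(* exponents a_i in {-oo, 0, ..., n}; None stands for -oo *)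
Definition olt (x y : option nat) : bool :=
  match x, y with
  | None, Some _ => true
  | Some k, Some l => (k < l)%N
  | _, _ => false
  end.

Fixpoint lex_lt (s t : seq (option nat)) : bool :=
  match s, t with
  | x :: s', y :: t' => olt x y || ((x == y) && lex_lt s' t')
  | _, _ => false
  end.

(* min { v_p(x), m }, with v_p(0) = oo *)
Definition vmin (p m : nat) (x : int) : nat :=
  if x == 0 then m else minn (logn p `|x|%N) m.

Definition norm_pair (p n : nat) (F K : {subfield L}) (sigma : gal_of K)
    (Ks : nat -> {subfield L}) (xi : L) (m : nat)
    (a : seq (option nat)) (d : int) : Prop :=
  [/\ [/\ (1 <= m)%N, size a = m,
         all (fun x => if x is Some k then (k <= n)%N else true) a &
         (if nth None a 0 is Some k then (k < n)%N else true)],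
      (p%:Z %| d - 1)%Z &
      exists (alpha : L) (delta : nat -> L),
        [/\ [/\ alpha \in K, alpha != 0, delta m \in K & delta m != 0],
            (forall i, (i < m)%N ->
               if nth None a i is Some k then delta i \in Ks k /\ delta i != 0
               else delta i = 1),
            sigma alpha = alpha ^ d * \prod_(i < m.+1) delta i ^+ (p ^ i) &
            xi = galNorm F K alpha ^ ((d - 1) %/ p%:Z)%Z
                 * galNorm F (Ks n.-1) (delta 0%N)
                 * \prod_(1 <= i < m.+1) galNorm F K (delta i) ^+ (p ^ i.-1)]].

Definition np_le (p m : nat) (a : seq (option nat)) (d : int)
    (a' : seq (option nat)) (d' : int) : bool :=
  lex_lt a a' || ((a == a') && (vmin p m (d' - 1) <= vmin p m (d - 1))%N).

Definition minimal_norm_pair (p n : nat) (F K : {subfield L}) (sigma : gal_of K)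
    (Ks : nat -> {subfield L}) (xi : L) (m : nat)
    (a : seq (option nat)) (d : int) : Prop :=
  norm_pair p n F K sigma Ks xi m a d /\
  forall a' d', norm_pair p n F K sigma Ks xi m a' d' -> np_le p m a d a' d'.

End NormPairs.
Arguments has_mu {F0 L}.
Arguments is_min_m_nu {F0 L}.
Arguments chi_congr {F0 L}.
Arguments norm_pair {F0 L}.
Arguments minimal_norm_pair {F0 L}.

From HB Require Import structures.
From mathcomp Require Import all_boot all_order all_algebra all_fingroup all_solvable all_field.
From mathcomp Require Import ring.
Import GRing.Theory.

(* Write sigma(z) = z^c; everything is controlled by the integer c.
   - A primitive p^t-th root of unity in F is a power of z fixed by sigma,
     so c = 1 mod p^t (root_in_F_congr); in particular c = 1 mod p, mod 4.
   - sigma has order p^n, so p^k | c^(p^n) - 1 but p^k does not divide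
     c^(p^(n-1)) - 1; lifting the exponent (lift_exponent_ndvd) makes
     y = z^((c^(p^n)-1)/p) a primitive p-th root of unity (norm_root_prim).
   - N_{K/F}(z) = z^S with S = sum_(i < p^n) c^i and p | S (galNorm_z).
   - The character congruence gives c = d + e p^m + f p^k (chi_decomposition).
   Existence (norm_pair_exists): with xi = y^u, alpha = z^u and
   delta_m = z^(e u) satisfy both relations, by an exponent identity.
   Minimality (norm_pair_minimal): a competitor d' with larger truncated
   valuation would make xi a p^r-th power in F (norm_pair_nseq_root),
   forcing p^(r+1) | c - 1 and hence p^(r+1) | d - 1.
   The file proceeds from elementary arithmetic to roots of unity, the
   general shape of all-(-oo) norm pairs, the extension F(z), and finally
   the theorem. *)

Lemma prime_expn_gt0 {p r : nat} : prime p -> 0 < p ^ r.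
Proof. by move=> p_pr; rewrite expn_gt0 prime_gt0. Qed.

(* The geometric sum of powers of 1 + p w, modulo p^2 (doubled to avoid
   halving): 2 * sum_(i<N) (1+pw)^i = 2N + pw N(N-1) mod 2p^2. *)
Lemma geom_sum_mod_sq (p w N : nat) : exists b,
  2 * (\sum_(i < N) (p * w + 1) ^ i) = 2 * N + p * w * (N * N.-1) + 2 * b * p ^ 2.
Proof.
have binom1 i : exists a, (p * w + 1) ^ i = 1 + i * p * w + a * p ^ 2.
  elim: i => [|i [a IH]]; first by exists 0; rewrite expn0.
  by exists (i * w ^ 2 + a + a * p * w); rewrite expnS IH; ring.
elim: N => [|N [b IH]]; first by exists 0; rewrite big_ord0 /=; ring.
have [a Ha] := binom1 N.
exists (b + a); rewrite big_ord_recr /= mulnDr IH Ha.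
by case: N {IH Ha} => [|N] /=; ring.
Qed.

Lemma geom_sum_pval (p x : nat) : prime p -> 0 < x -> p %| x - 1 ->
  (p = 2 -> 4 %| x - 1) ->
  p %| \sum_(i < p) x ^ i /\ ~~ (p ^ 2 %| \sum_(i < p) x ^ i).
Proof.
move=> p_pr x_gt0 /dvdnP[w xw] p2; have p_gt1 := prime_gt1 p_pr.
have ex : x = p * w + 1 by rewrite -(subnK x_gt0) xw mulnC.
have [p_eq2 | p_neq2] := eqVneq p 2.
  have := p2 p_eq2; rewrite p_eq2 !big_ord_recr big_ord0 /= expn0 expn1 ex p_eq2.
  rewrite addnK (_ : 4 = 2 * 2) // dvdn_pmul2l // => /dvdnP[v ->].
  rewrite (_ : 0 + 1 + _ = 2 * (2 * v + 1)); last by ring.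
  rewrite dvdn_mulr // (_ : 2 ^ 2 = 2 * 2) // dvdn_pmul2l // dvdn_addr //.
  exact: dvdn_mulr.
have p_odd : coprime p 2.
  rewrite prime_coprime //; apply/negP => /(dvdn_leq (isT : 0 < 2)) p_le2.
  by move: p_neq2; rewrite eqn_leq p_le2 p_gt1.
have [b Hb] := geom_sum_mod_sq p w p; rewrite -ex in Hb.
set T := \sum_(i < p) x ^ i in Hb *.
have e2T : 2 * T = p * (2 + p * (w * p.-1 + 2 * b)) by rewrite Hb; ring.
split; first by rewrite -(Gauss_dvdr _ p_odd) e2T dvdn_mulr.
apply/negP => /(dvdn_mull 2); rewrite e2T (_ : p ^ 2 = p * p) ?mulnn //.
rewrite dvdn_pmul2l ?prime_gt0 // dvdn_addl; last exact: dvdn_mulr.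
by move/(dvdn_leq (isT : 0 < 2)) => p_le2; move: p_neq2; rewrite eqn_leq p_le2 p_gt1.
Qed.

(* Lifting the exponent: under the same hypotheses, if p^k does not divide
   x - 1 then p^(k+1) does not divide x^p - 1 = (x - 1)(1 + ... + x^(p-1)). *)
Lemma lift_exponent_ndvd (p k x : nat) : prime p -> 0 < x -> p %| x - 1 ->
  (p = 2 -> 4 %| x - 1) -> ~~ (p ^ k %| x - 1) -> ~~ (p ^ k.+1 %| x ^ p - 1).
Proof.
move=> p_pr x_gt0 px p2 npk.
have [/dvdnP[T' eT] npT] := @geom_sum_pval p x p_pr x_gt0 px p2.
have npT' : ~~ (p %| T').
  by apply: contra npT; rewrite eT => /dvdnP[u ->]; rewrite -mulnA mulnn dvdn_mull.
rewrite !subn1 predn_exp -!subn1 eT mulnA expnSr dvdn_pmul2r ?prime_gt0 //.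
by rewrite Gauss_dvdl // coprimeXl // prime_coprime.
Qed.

Lemma expn_eq1_mod {q c : nat} (i : nat) : c = 1 %[mod q] -> c ^ i = 1 %[mod q].
Proof. by move=> h; rewrite -modnXm h modnXm exp1n. Qed.

Local Open Scope ring_scope.

Lemma prim_root_neq0 (R : fieldType) (N : nat) (z : R) :
  N.-primitive_root z -> z != 0.
Proof.
move=> z_prim; apply: contra_eq_neq (prim_expr_order z_prim) => ->.
by rewrite expr0n gtn_eqF ?(prim_order_gt0 z_prim) // eq_sym oner_eq0.
Qed.
Arguments prim_root_neq0 {R N z}.

Lemma prim_root_expz_eq (R : fieldType) (N : nat) (z : R) (i j : int) :
  N.-primitive_root z -> (z ^ i == z ^ j) = (N%:Z %| i - j)%Z.
Proof.
move=> z_prim; have z_neq0 := prim_root_neq0 z_prim.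
have expz_eq1 t : (z ^ t == 1) = (N%:Z %| t)%Z.
  case: t => t; first by rewrite -exprnP -(prim_order_dvd z_prim) dvdzE.
  by rewrite NegzE -invr_expz invr_eq1 -exprnP -(prim_order_dvd z_prim) dvdzE.
rewrite -expz_eq1 expfzDr // -invr_expz.
have zj_neq0 : z ^ j != 0 by rewrite expfz_neq0.
apply/eqP/eqP => [-> | zij1]; first by rewrite divff.
by rewrite -[z ^ i](divfK zj_neq0) zij1 mul1r.
Qed.
Arguments prim_root_expz_eq {R N z i j}.

Lemma galNormXz (F0 : fieldType) (L : splittingFieldType F0) (U V : {vspace L})
  (a : L) (t : int) : galNorm U V (a ^ t) = galNorm U V a ^ t.
Proof.
case: t => N; first exact: galNormX.
by rewrite NegzE -!exprnN galNormV galNormX.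
Qed.

Lemma prim_root_pfactor (R : fieldType) (p r : nat) (W : R) : prime p ->
  W ^+ (p ^ r.+1) = 1 -> W ^+ (p ^ r) != 1 -> (p ^ r.+1).-primitive_root W.
Proof.
move=> p_pr W1 Wr_neq1.
have [o W_prim /(dvdn_pfactor _ _ p_pr)[s s_le o_eq]] :=
  prim_order_exists (prime_expn_gt0 p_pr) W1.
rewrite {o}o_eq in W_prim.
case: (ltnP s r.+1) => [s_lt | s_ge]; last by have /eqP<- : s == r.+1 by rewrite eqn_leq s_le.
by move: Wr_neq1; rewrite -(prim_order_dvd W_prim) dvdn_exp2l.
Qed.

Lemma lex_lt_nseq (a : seq (option nat)) (m : nat) :
  size a = m -> a != nseq m None -> lex_lt (nseq m None) a.
Proof.
elim: a m => [|x a IH] [|m] //= [sz] a_neq.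
case: x a_neq => [k|] //= a_neq.
by rewrite IH //; apply: contra a_neq => /eqP ->.
Qed.

Lemma vmin_le (p m : nat) (x : int) : (vmin p m x <= m)%N.
Proof. by rewrite /vmin; case: ifP => // _; apply: geq_minr. Qed.

Lemma dvdz_of_lt_vmin {p m r : nat} {x : int} :
  prime p -> (r < vmin p m x)%N -> ((p ^ r.+1)%N%:Z %| x)%Z.
Proof.
move=> p_pr; rewrite /vmin; case: eqP => [-> | /eqP x_neq0]; first by rewrite dvdz0.
by rewrite leq_min => /andP[r_lt _]; rewrite dvdzE pfactor_dvdn // absz_gt0.
Qed.

Lemma ndvdz_vmin {p m : nat} {x : int} : prime p -> (vmin p m x < m)%N ->
  ~~ ((p ^ (vmin p m x).+1)%N%:Z %| x)%Z.
Proof.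
move=> p_pr; rewrite /vmin; case: eqP => [_ | /eqP x_neq0]; first by rewrite ltnn.
rewrite gtn_min ltnn orbF => /ltnW/minn_idPl ->.
by rewrite dvdzE pfactor_dvdn ?absz_gt0 // ltnn.
Qed.

Lemma norm_exponent_identity (R : idomainType) (p Q S s c d e f q A B : R) :
  p != 0 -> Q * p = (c - 1) * S -> S = s * p -> d - 1 = q * p ->
  c = d + e * (A * p) + f * B -> Q = S * q + S * e * A + s * f * B.
Proof.
move=> p_neq0 QpE SE dE cE; apply: (mulIf p_neq0).
have dE' : d = q * p + 1 by rewrite -dE subrK.
by rewrite QpE SE cE dE'; ring.
Qed.

(* In a norm pair whose exponent tuple is all -oo, only alpha and delta_m
   contribute; if moreover p^(r+1) | d - 1 with r < m, the norm relation
   exhibits xi as a p^r-th power of an element of F. *)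
Lemma norm_pair_nseq_root (F0 : fieldType) (L : splittingFieldType F0)
  (p n : nat) (F K : {subfield L}) (sigma : gal_of K) (Ks : nat -> {subfield L})
  (xi : L) (m r : nat) (d : int) :
  prime p -> galois F K -> (r < m)%N -> ((p ^ r.+1)%N%:Z %| d - 1)%Z ->
  norm_pair p n F K sigma Ks xi m (nseq m None) d ->
  exists2 W, W \in F & W ^+ (p ^ r) = xi.
Proof.
move=> p_pr galFK r_lt /dvdzP[q d1].
move=> [_ _ [alpha [delta [[alphaK _ deltaK _] delta1 _ xiE]]]].
have delta_lt i : (i < m)%N -> delta i = 1.
  by move=> i_lt; have := delta1 i i_lt; rewrite nth_nseq if_same.
have m_gt0 : (0 < m)%N := leq_ltn_trans (leq0n r) r_lt.
have div_d1 : ((d - 1) %/ p%:Z)%Z = q * (p ^ r)%N%:Z.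
  by rewrite d1 expnSr PoszM mulrA mulzK // eqz_nat -lt0n prime_gt0.
move: xiE; rewrite div_d1 delta_lt // galNorm1 mulr1 big_nat_recr //= big_nat_cond big1.
  set Na := galNorm F K alpha; set Nd := galNorm F K (delta m) => xiE.
  exists (Na ^ q * Nd ^+ (p ^ (m.-1 - r))).
    by rewrite rpredM ?rpredX ?rpredXz ?mem_galNorm.
  rewrite xiE mul1r exprMn exprnP exprz_exp -exprM -expnD subnK //.
  by rewrite -ltnS prednK.
by move=> i /andP[/andP[_ i_lt] _]; rewrite delta_lt ?galNorm1 ?expr1n.
Qed.
Arguments norm_pair_nseq_root {F0 L p n F K sigma Ks xi m r d}.

Section CyclotomicExtension.

Variables (F0 : fieldType) (L : splittingFieldType F0).
Variables (p n k c : nat) (F : {subfield L}) (z : L).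
Local Notation K := <<F; z>>%AS.
Variable sigma : gal_of K.
Hypotheses (p_pr : prime p) (n_gt0 : (0 < n)%N).
Hypotheses (z_prim : (p ^ k).-primitive_root z) (galFK : galois F K).
Hypotheses (dimK : \dim_F K = (p ^ n)%N) (GalK : 'Gal(K / F)%g = <[sigma]>%g).
Hypothesis sigma_z : sigma z = z ^+ c.

Let sigmaG : sigma \in 'Gal(K / F)%g. Proof. by rewrite GalK cycle_id. Qed.

Let sigmaX (a : L) (N : nat) : sigma (a ^+ N) = sigma a ^+ N.
Proof. by rewrite rmorphXn. Qed.

Lemma gal_order : #[sigma]%g = (p ^ n)%N.
Proof. by rewrite /order -GalK -galois_dim. Qed.

Lemma gal_expn_z (i : nat) : (sigma ^+ i)%g z = z ^+ (c ^ i).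
Proof.
elim: i => [|i IH]; first by rewrite expg0 gal_id expn0 expr1.
by rewrite expgSr galM ?memv_adjoin // IH sigmaX sigma_z -exprM expnS mulnC.
Qed.

Lemma gal_fix_z (i : nat) : (sigma ^+ i)%g z = z -> (p ^ n %| i)%N.
Proof.
move=> fix_z; rewrite -gal_order order_dvdn.
by rewrite (gal_adjoin_eq (groupX i sigmaG) (group1 _)) fix_z gal_id.
Qed.

Lemma z_notin_F : z \notin F.
Proof.
apply/negP => zF; have /gal_fix_z : (sigma ^+ 1)%g z = z.
  by rewrite expg1 (fixed_gal _ sigmaG zF) // subv_adjoin.
by rewrite dvdn1 -(expn0 p) (inj_eq (expnI (prime_gt1 p_pr))) eqn0Ngt n_gt0.
Qed.

Lemma c_gt0 : (0 < c)%N.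
Proof.
rewrite lt0n; apply: contraNneq z_notin_F => c0.
have := gal_expn_z #[sigma]%g; rewrite expg_order gal_id c0 exp0n ?order_gt0 //.
by rewrite expr0 => ->; apply: rpred1.
Qed.

(* A primitive p^t-th root of unity in F forces t < k and c = 1 mod p^t:
   it is a power of z fixed by sigma. *)
Lemma root_in_F_congr {t : nat} {W : L} : W \in F -> (p ^ t).-primitive_root W ->
  (t < k)%N /\ c = 1 %[mod p ^ t].
Proof.
move=> WF W_prim; set s := minn t k.
have u_prim := dvdn_prim_root z_prim (dvdn_exp2l p (geq_minr t k)).
set u := z ^+ (p ^ k %/ p ^ s) in u_prim.
have uF : u \in F.
  have /(prim_rootP W_prim)[i ->] :=
    expr_dvd (prim_expr_order u_prim) (dvdn_exp2l p (geq_minl t k)).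
  exact: rpredX.
have /eqP : u ^+ c = u ^+ 1.
  by rewrite expr1 -{2}(fixed_gal _ sigmaG uF) ?subv_adjoin // sigmaX sigma_z -!exprM mulnC.
rewrite (eq_prim_root_expr u_prim) => c_mod.
have t_lt_k : (t < k)%N.
  rewrite ltnNge; apply/negP => k_le_t.
  move: uF; rewrite /u /s (minn_idPr k_le_t) divnn prime_expn_gt0 // expr1.
  by apply/negP; exact: z_notin_F.
by move: c_mod; rewrite /s (minn_idPl (ltnW t_lt_k)) => /eqP.
Qed.

Lemma gal_expn_fix (i : nat) : ((sigma ^+ i)%g z == z) = (p ^ k %| c ^ i - 1)%N.
Proof.
rewrite gal_expn_z -{2}(expr1 z) (eq_prim_root_expr z_prim) eqn_mod_dvd //.
by rewrite expn_gt0 c_gt0.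
Qed.

(* N_{K/F}(z) is the product of the conjugates sigma^i(z) = z^(c^i). *)
Lemma galNorm_z : galNorm F K z = z ^+ (\sum_(i < p ^ n) c ^ i).
Proof.
have cycle_enum : <[sigma]>%g = [set (sigma ^+ val i)%g | i : 'I_(p ^ n)].
  apply/setP => x; apply/idP/imsetP => [/cyclePmin[i] | [i _ ->]].
    by rewrite gal_order => i_lt ->; exists (Ordinal i_lt).
  exact: mem_cycle.
rewrite /galNorm GalK cycle_enum big_imset /= => [|i i' _ _ /eqP].
  by rewrite -prodrXr; apply: eq_bigr => i _; rewrite gal_expn_z.
rewrite eq_expg_mod_order gal_order !modn_small //.
by move=> /eqP /val_inj.
Qed.

(* If k <= j
   this is sigma(z) = z^d; otherwise j = m by maximality of j, and the
   congruence on the primitive p^m-th root z^(p^(k-m)) gives c = d mod p^m. *)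
Lemma chi_decomposition (m j : nat) (d : int) :
  is_min_m_nu p K m j -> chi_congr p K sigma j d ->
  exists e f : int, c%:Z = d + e * (p ^ m)%N%:Z + f * (p ^ k)%N%:Z.
Proof.
move=> [j_le_m _ j_max] chi_d; have zK := memv_adjoin F z.
have [k_le_j | j_lt_k] := leqP k j.
  have := chi_d z zK (expr_dvd (prim_expr_order z_prim) (dvdn_exp2l p k_le_j)).
  rewrite sigma_z exprnP => /eqP; rewrite (prim_root_expz_eq z_prim) => /dvdzP[f cf].
  by exists 0, f; rewrite mul0r addr0 -cf addrC subrK.
have j_eq_m : j = m.
  apply/eqP; rewrite eqn_leq j_le_m leqNgt; apply/negP => j_lt_m.
  apply: (j_max j_lt_m); exists (z ^+ (p ^ k %/ p ^ j.+1)); first exact: rpredX.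
  exact: (dvdn_prim_root z_prim (dvdn_exp2l p j_lt_k)).
rewrite {}j_eq_m in j_lt_k chi_d.
have w_prim := dvdn_prim_root z_prim (dvdn_exp2l p (ltnW j_lt_k)).
have := chi_d _ (rpredX _ zK) (prim_expr_order w_prim).
rewrite sigmaX sigma_z exprAC exprnP => /eqP.
rewrite (prim_root_expz_eq w_prim) => /dvdzP[e ce].
by exists e, 0; rewrite mul0r addr0 -ce addrC subrK.
Qed.

Section RootOfUnityInF.

Variable xi : L.
Hypotheses (xiF : xi \in F) (xi_prim : p.-primitive_root xi).
Hypothesis mu4F : p = 2 -> has_mu p F 2.

Let xi_congr : (1 < k)%N /\ c = 1 %[mod p].
Proof. by have := @root_in_F_congr 1 xi xiF; rewrite expn1 => /(_ xi_prim). Qed.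

Lemma k_gt1 : (1 < k)%N. Proof. by case: xi_congr. Qed.

Lemma c_mod_p : c = 1 %[mod p]. Proof. by case: xi_congr. Qed.

(* p divides the exponent of N_{K/F}(z) = z^(sum c^i), a sum of p^n terms = 1 mod p. *)
Lemma dvdn_norm_exp : (p %| \sum_(i < p ^ n) c ^ i)%N.
Proof.
rewrite /dvdn -modn_summ (eq_bigr (fun=> 1%N)) => [|i _].
  by rewrite sum_nat_const card_ord muln1 -/(dvdn p (p ^ n)) dvdn_exp.
by rewrite (expn_eq1_mod i c_mod_p) modn_small ?prime_gt1.
Qed.

(* sigma has order exactly p^n, so p^k divides c^(p^n) - 1 but not
   c^(p^(n-1)) - 1; lifting the exponent then shows that p^(k+1) does not
   divide c^(p^n) - 1. *)
Lemma c_pow_val :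
  (p ^ k %| c ^ (p ^ n) - 1)%N /\ ~~ (p ^ k.+1 %| c ^ (p ^ n) - 1)%N.
Proof.
have [n' n_eq] : exists n', n = n'.+1 by exists n.-1; rewrite prednK.
split; first by rewrite -gal_expn_fix -gal_order expg_order gal_id.
have not_fixed : ~~ (p ^ k %| c ^ (p ^ n') - 1)%N.
  rewrite -gal_expn_fix; apply/negP => /eqP/gal_fix_z.
  by rewrite n_eq dvdn_Pexp2l ?prime_gt1 // ltnn.
rewrite n_eq (expnSr p n') expnM; apply: lift_exponent_ndvd not_fixed => //.
- by rewrite expn_gt0 c_gt0.
- by rewrite -eqn_mod_dvd ?expn_gt0 ?c_gt0 // (expn_eq1_mod _ c_mod_p).
move=> p2; have [W WF W_prim] := mu4F p2.
have [_ c_mod4] := root_in_F_congr WF W_prim.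
rewrite p2 in c_mod4.
by rewrite -eqn_mod_dvd ?expn_gt0 ?c_gt0 // (expn_eq1_mod _ c_mod4).
Qed.

Lemma norm_root_prim : p.-primitive_root (z ^+ ((c ^ (p ^ n) - 1) %/ p)).
Proof.
have [dvd_k ndvd_k1] := c_pow_val.
have Qp : ((c ^ (p ^ n) - 1) %/ p * p)%N = (c ^ (p ^ n) - 1)%N.
  by rewrite divnK // (dvdn_trans _ dvd_k) // dvdn_exp // ltnW // k_gt1.
apply: (@prim_root_pfactor _ p 0) => //.
  by rewrite expn1 -exprM Qp; apply/eqP; rewrite -(prim_order_dvd z_prim).
rewrite expn0 expr1 -(prim_order_dvd z_prim); apply: contra ndvd_k1 => dvd_Q.
by rewrite -Qp expnSr dvdn_mul.
Qed.

Variables (m : nat) (d e f : int).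
Hypothesis m_gt0 : (0 < m)%N.
Hypothesis c_decomp : c%:Z = d + e * (p ^ m)%N%:Z + f * (p ^ k)%N%:Z.

Lemma dvdz_d1 {t : nat} : (t <= m)%N -> (t <= k)%N -> c = 1 %[mod p ^ t] ->
  ((p ^ t)%N%:Z %| d - 1)%Z.
Proof.
move=> t_le_m t_le_k c_mod.
have -> : d - 1 = (c%:Z - 1) - e * (p ^ m)%N%:Z - f * (p ^ k)%N%:Z.
  by rewrite c_decomp; ring.
have dvd_c1 : ((p ^ t)%N%:Z %| c%:Z - 1)%Z.
  by rewrite subzn ?c_gt0 // dvdzE -eqn_mod_dvd ?c_gt0 // c_mod.
have dvd_pow i : (t <= i)%N -> ((p ^ t)%N%:Z %| (p ^ i)%N%:Z)%Z.
  by move=> t_le_i; rewrite dvdzE dvdn_exp2l.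
by apply: rpredB; [apply: rpredB |]; rewrite ?dvdz_mull ?dvd_pow.
Qed.

Lemma d_mod_p : (p%:Z %| d - 1)%Z.
Proof. by have := dvdz_d1 m_gt0 (ltnW k_gt1); rewrite expn1 => /(_ c_mod_p). Qed.

Lemma sigma_z_decomp : sigma z = z ^ d * z ^ (e * (p ^ m)%N%:Z).
Proof.
rewrite sigma_z exprnP -expfzDr ?(prim_root_neq0 z_prim) //.
apply/eqP; rewrite (prim_root_expz_eq z_prim) c_decomp.
by apply/dvdzP; exists f; ring.
Qed.

(* Existence: write xi = y^u with y = z^((c^(p^n)-1)/p); then alpha = z^u and
   delta_m = z^(e u) (all other delta_i = 1) satisfy both defining relations. *)
Lemma norm_pair_exists (Ks : nat -> {subfield L}) :
  norm_pair p n F K sigma Ks xi m (nseq m None) d.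
Proof.
have z_neq0 := prim_root_neq0 z_prim.
set Q := ((c ^ (p ^ n) - 1) %/ p)%N; set S := (\sum_(i < p ^ n) c ^ i)%N.
have [[u _] /= xi_u] := prim_rootP norm_root_prim (prim_expr_order xi_prim).
have [q d1] := dvdzP d_mod_p; have [s S_eq] := dvdnP dvdn_norm_exp.
have Q_eq : Q%:Z = S%:Z * q + S%:Z * e * (p ^ m.-1)%N%:Z + s%:Z * f * (p ^ k)%N%:Z.
  apply: (@norm_exponent_identity _ p%:Z _ _ _ c%:Z d) d1 _.
  - by rewrite eqz_nat -lt0n prime_gt0.
  - rewrite -!PoszM divnK ?(dvdn_trans _ (proj1 c_pow_val)) ?dvdn_exp ?(ltnW k_gt1) //.
    by rewrite subzn ?expn_gt0 ?c_gt0 // -PoszM !subn1 predn_exp.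
  - by rewrite -PoszM -S_eq.
  - by rewrite c_decomp -PoszM -expnSr prednK.
pose delta i := if i == m then z ^ (e * u%:Z) else 1.
have delta_lt i : (i < m)%N -> delta i = 1 by move=> i_lt; rewrite /delta ltn_eqF.
split; [split | exact: d_mod_p | exists (z ^+ u), delta; split].
- exact: m_gt0.
- exact: size_nseq.
- by rewrite all_nseq orbT.
- by rewrite nth_nseq m_gt0.
- by rewrite rpredX ?expf_neq0 /delta ?eqxx ?rpredXz ?expfz_neq0 ?memv_adjoin.
- by move=> i i_lt; rewrite nth_nseq i_lt delta_lt.
- rewrite big_ord_recr big1 /= => [|i _]; last by rewrite delta_lt ?expr1n.
  rewrite mul1r /delta eqxx sigmaX sigma_z_decomp !exprnP expfzMl !exprz_exp.
  by congr (z ^ _ * z ^ _); ring.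
rewrite d1 mulzK ?eqz_nat -?lt0n ?prime_gt0 // delta_lt // galNorm1 mulr1.
rewrite big_nat_recr //= big_nat_cond big1 => [|i /andP[/andP[_ i_lt] _]]; last first.
  by rewrite delta_lt ?galNorm1 ?expr1n.
rewrite mul1r /delta eqxx galNormX galNormXz galNorm_z xi_u.
rewrite !exprnP !exprz_exp -expfzDr //; apply/eqP; rewrite (prim_root_expz_eq z_prim).
by rewrite -/Q -/S Q_eq; apply/dvdzP; exists (s%:Z * f * u%:Z); ring.
Qed.

(* Minimality: a competitor d' with v_p(d' - 1) > r = v_p(d - 1) (truncated
   at m) would make xi a p^r-th power of some W in F, a primitive p^(r+1)-th
   root of unity; then c = 1 mod p^(r+1) and p^(r+1) | d - 1, which is absurd. *)
Lemma norm_pair_minimal (Ks : nat -> {subfield L}) (d' : int) :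
  norm_pair p n F K sigma Ks xi m (nseq m None) d' ->
  (vmin p m (d' - 1) <= vmin p m (d - 1))%N.
Proof.
move=> np'; set r := vmin p m (d - 1).
have [r_lt_m | m_le_r] := ltnP r m; last exact: leq_trans (vmin_le _ _ _) m_le_r.
rewrite leqNgt; apply/negP => /(dvdz_of_lt_vmin p_pr) dvd_d'.
have [W WF Wxi] := norm_pair_nseq_root p_pr galFK r_lt_m dvd_d' np'.
have W_prim : (p ^ r.+1).-primitive_root W.
  apply: prim_root_pfactor => //; first by rewrite expnSr exprM Wxi prim_expr_order.
  by rewrite Wxi -[xi]expr1 -(prim_order_dvd xi_prim) dvdn1 gtn_eqF ?prime_gt1.
have [r_lt_k c_mod] := root_in_F_congr WF W_prim.
by apply: (negP (ndvdz_vmin p_pr r_lt_m)); apply: dvdz_d1; rewrite // ltnW.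
Qed.

End RootOfUnityInF.

End CyclotomicExtension.
Arguments chi_decomposition {F0 L p k c F z sigma} _ _ {m j d}.
Arguments norm_pair_exists {F0 L p n k c F z sigma} _ _ _ _ _ _ _ {xi} _ _ _ {m d e f}.
Arguments norm_pair_minimal {F0 L p n k c F z sigma} _ _ _ _ _ _ _ {xi} _ {m d e f}.

Theorem proposition3p3 (F0 : fieldType) (L : splittingFieldType F0)
  (p n : nat) (F K : {subfield L}) (sigma : gal_of K)
  (Ks : nat -> {subfield L}) (xi : L) (m : nat) (d : int) :
  prime p -> (1 <= n)%N -> p \notin [pchar L] ->
  (F <= K)%VS -> galois F K -> \dim_F K = (p ^ n)%N ->
  'Gal(K / F)%g = <[sigma]>%g ->
  (forall i, (i <= n)%N ->
     [/\ (F <= Ks i)%VS, (Ks i <= K)%VS & \dim_F (Ks i) = (p ^ i)%N]) ->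
  xi \in F -> p.-primitive_root xi ->
  (exists k, (1 <= k)%N /\
     exists2 z : L, (p ^ k)%N.-primitive_root z & K = <<F; z>>%AS) ->
  (p = 2%N -> has_mu p F 2) ->
  (1 <= m)%N ->
  (exists j, is_min_m_nu p K m j /\ chi_congr p K sigma j d) ->
  minimal_norm_pair p n F K sigma Ks xi m (nseq m None) d.
Proof.
move=> p_pr n_gt0 _ _ galFK dimK GalK _ xiF xi_prim [k [_ [z z_prim K_eq]]] mu4F m_gt0.
move=> [j [j_min chi_d]]; subst K.
(* sigma(z) is again a p^k-th root of unity, hence a power z^c of z. *)
have sigma_z1 : sigma z ^+ (p ^ k) = 1.
  have sigma_zpk : sigma (z ^+ (p ^ k)) = sigma z ^+ (p ^ k) by rewrite rmorphXn.
  by rewrite -sigma_zpk (prim_expr_order z_prim : z ^+ _ = 1) rmorph1.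
have [[c _] /= sigma_z] := prim_rootP z_prim sigma_z1.
have [e [f c_decomp]] := chi_decomposition z_prim sigma_z j_min chi_d.
split=> [|a' d' np']; first exact (norm_pair_exists p_pr n_gt0 z_prim galFK dimK GalK
                                   sigma_z xiF xi_prim mu4F m_gt0 c_decomp Ks).
(* A competitor with a different tuple is lexicographically larger. *)
have [[_ size_a' _ _] _ _] := np'.
have [a'_eq | a'_neq] := eqVneq a' (nseq m None); last by rewrite /np_le lex_lt_nseq.
subst a'; rewrite /np_le eqxx.
have np_min := norm_pair_minimal p_pr n_gt0 z_prim galFK dimK GalK sigma_z
                                   xi_prim c_decomp _ _ np'.
by rewrite np_min orbT.
Qed.
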